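(* Let $s\ge2$ and $1=a_1\le a_2\le\dots\le a_s$ with at least one of $a_2,\dots,a_s$ greater than $1$. Define $c_i=1-a_i^{-1}$ for $2\le i\le s$, $M_j=\tfrac12(c_2^j+\dots+c_s^j)$ for $j\ge1$, $$p_0=\prod_{i=2}^s a_i^{-1/2},\qquad p_j=\frac1j\sum_{i=0}^{j-1}M_{j-i}\,p_i\ \ (j\ge1),$$ and $W_i=\sum_{j=0}^i p_j$ for $i\ge0$. Then the sequence $\{W_i\}$ is log-concave: $W_i^2\ge W_{i-1}W_{i+1}$ for all $i\ge1$.
   Context: The $p_j$ are the mixture weights in the expansion $H(u)=\sum_{j\ge0}p_jG_{s+2j}(u)$ of the cdf of $\sum_{i=1}^s a_iY^{(i)}$ ($Y^{(i)}$ independent $\chi^2_1$) in terms of chi-square cdfs $G_{s+2j}$. *)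

From Stdlib Require Import Reals Lra Lia List.
Open Scope R_scope.

Fixpoint sum_range (f : nat -> R) (m k : nat) : R :=
  (* sum of f m, f (m+1), ..., f (m+k-1) : k terms *)
  match k with
  | O => 0
  | S k' => f m + sum_range f (S m) k'
  end.

Definition cc (a : nat -> R) (i : nat) : R := 1 - / a i.

Definition MM (s : nat) (a : nat -> R) (j : nat) : R :=
  / 2 * sum_range (fun i => (cc a i) ^ j) 2 (s - 1).

Fixpoint prod_range (f : nat -> R) (m k : nat) : R :=
  match k with
  | O => 1
  | S k' => f m * prod_range f (S m) k'
  end.

Definition p0 (s : nat) (a : nat -> R) : R :=
  prod_range (fun i => Rpower (a i) (- (1/2))) 2 (s - 1).

(* list [p_0; ...; p_n] built by the recursion
   p_j = (1/j) sum_{i=0}^{j-1} M_{j-i} p_i *)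
Fixpoint plist (s : nat) (a : nat -> R) (n : nat) : list R :=
  match n with
  | O => p0 s a :: nil
  | S n' =>
      let l := plist s a n' in
      let j := S n' in
      l ++ (/ INR j * sum_range (fun i => MM s a (j - i)%nat * nth i l 0) 0 j) :: nil
  end.

Definition pp (s : nat) (a : nat -> R) (j : nat) : R := nth j (plist s a j) 0.

Definition WW (s : nat) (a : nat -> R) (i : nat) : R :=
  sum_range (pp s a) 0 (S i).

(* Write c_i = 1 - 1/a_i in [0,1].  The recursion j p_j = sum_{i<j} M_{j-i} p_i says
   that P(x) = sum_j p_j x^j satisfies P' = (sum_t M_{t+1} x^t) P, i.e. P has the
   logarithmic derivative of p_0 prod_{i=2}^s (1 - c_i x)^{-1/2}.  Hence
   sum_i W_i x^i = P(x)/(1-x) = p_0 (1-x)^{-1} prod_{i=2}^s (1 - c_i x)^{-1/2}.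

   Comparing log-derivatives identifies W with p_0 times a product of such series,
   and lemma3 follows from conv_incr_lc applied once per factor. *)

From Stdlib Require Import Reals Lra Lia Psatz List.
Open Scope R_scope.

Lemma sum_first (f : nat -> R) (n : nat) :
  sum_f_R0 f (S n) = f 0%nat + sum_f_R0 (fun k => f (S k)) n.
Proof. rewrite decomp_sum by lia. reflexivity. Qed.

Lemma sum_rev (F : nat -> R) (n : nat) :
  sum_f_R0 F n = sum_f_R0 (fun k => F (n - k)%nat) n.
Proof.
  revert F; induction n as [|n IH]; intros F; [reflexivity|].
  rewrite sum_first, IH, tech5, Nat.sub_diag.
  assert (E : sum_f_R0 (fun k => F (S (n - k))) n = sum_f_R0 (fun k => F (S n - k)%nat) n)
    by (apply sum_eq; intros k Hk; f_equal; lia).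
  rewrite E; lra.
Qed.

Lemma sum_triangle_swap (F : nat -> nat -> R) (n : nat) :
  sum_f_R0 (fun k => sum_f_R0 (fun i => F i k) k) n =
  sum_f_R0 (fun i => sum_f_R0 (fun l => F i (i + l)%nat) (n - i)) n.
Proof.
  induction n as [|n IH]; [reflexivity|].
  rewrite !tech5, IH, Nat.sub_diag.
  assert (E : sum_f_R0 (fun i => sum_f_R0 (fun l => F i (i + l)%nat) (S n - i)) n =
              sum_f_R0 (fun i => sum_f_R0 (fun l => F i (i + l)%nat) (n - i) + F i (S n)) n).
  { apply sum_eq; intros i Hi. replace (S n - i)%nat with (S (n - i)) by lia.
    rewrite tech5. do 2 f_equal. lia. }
  rewrite E, plus_sum. simpl. rewrite Nat.add_0_r. lra.
Qed.

Lemma sum_nonneg (f : nat -> R) (n : nat) :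
  (forall k, (k <= n)%nat -> 0 <= f k) -> 0 <= sum_f_R0 f n.
Proof. intros H. rewrite <- (Rmult_0_l (INR (S n))), <- sum_cte. apply sum_Rle; auto. Qed.

Definition conv (f h : nat -> R) (n : nat) : R :=
  sum_f_R0 (fun k => f k * h (n - k)%nat) n.

Lemma conv_ext (f f' h h' : nat -> R) (n : nat) :
  (forall k, f k = f' k) -> (forall k, h k = h' k) -> conv f h n = conv f' h' n.
Proof. intros Ef Eh. apply sum_eq; intros k _. rewrite Ef, Eh. reflexivity. Qed.

Lemma conv_comm (f h : nat -> R) (n : nat) : conv f h n = conv h f n.
Proof.
  unfold conv. rewrite sum_rev. apply sum_eq; intros k Hk.
  replace (n - (n - k))%nat with k by lia. ring.
Qed.

Lemma conv_assoc (f g h : nat -> R) (n : nat) :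
  conv (conv f g) h n = conv f (conv g h) n.
Proof.
  unfold conv.
  transitivity (sum_f_R0 (fun k =>
     sum_f_R0 (fun i => f i * g (k - i)%nat * h (n - k)%nat) k) n).
  { apply sum_eq; intros k _. rewrite Rmult_comm, scal_sum.
    apply sum_eq; intros; ring. }
  rewrite (sum_triangle_swap (fun i k => f i * g (k - i)%nat * h (n - k)%nat)).
  apply sum_eq; intros i Hi. rewrite scal_sum. apply sum_eq; intros l Hl.
  replace (i + l - i)%nat with l by lia.
  replace (n - (i + l))%nat with (n - i - l)%nat by lia. ring.
Qed.

Lemma conv_plus_l (f f' h : nat -> R) (n : nat) :
  conv (fun k => f k + f' k) h n = conv f h n + conv f' h n.
Proof. unfold conv. rewrite <- plus_sum. apply sum_eq; intros; ring. Qed.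

Definition deriv (f : nat -> R) (n : nat) : R := INR (S n) * f (S n).

Lemma deriv_conv (f h : nat -> R) (n : nat) :
  deriv (conv f h) n = conv (deriv f) h n + conv f (deriv h) n.
Proof.
  unfold deriv, conv. rewrite scal_sum.
  rewrite (sum_eq _ (fun k => INR k * f k * h (S n - k)%nat
                      + f k * (INR (S n - k) * h (S n - k)%nat)))
    by (intros k Hk; rewrite minus_INR by lia; ring).
  rewrite plus_sum, sum_first, tech5, Nat.sub_diag.
  replace (sum_f_R0 (fun k => f k * (INR (S n - k) * h (S n - k)%nat)) n)
    with (sum_f_R0 (fun k => f k * (INR (S (n - k)) * h (S (n - k)))) n)
    by (apply sum_eq; intros k Hk; replace (S n - k)%nat with (S (n - k)) by lia; ring).
  simpl (INR 0); cbn [Nat.sub]. lra.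
Qed.

Section ConvolutionLogConcave.

Variable X : nat -> R.
Hypothesis X0 : X 0%nat = 0.
Hypothesis X_pos : forall k, 0 < X (S k).
Hypothesis X_nondecr : forall k, X k <= X (S k).
Hypothesis X_lc : forall k, X k * X (S (S k)) <= X (S k) ^ 2.

Lemma X_nonneg (k : nat) : 0 <= X k.
Proof. destruct k; [rewrite X0; lra | apply Rlt_le, X_pos]. Qed.

(* The 2x2 minor X_A X_B - X_{A-1} X_{B+1} of the Toeplitz matrix of X. *)
Definition minor (A B : nat) : R := X A * X B - X (A - 1)%nat * X (S B).

Lemma minor_below_diag (A : nat) : (1 <= A)%nat -> minor A (A - 1) = 0.
Proof. intros HA. unfold minor. replace (S (A - 1)) with A by lia. ring. Qed.

Lemma minor_nonneg (A B : nat) : (1 <= A <= S B)%nat -> 0 <= minor A B.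
Proof.
  intros [HA HAB].
  destruct (Nat.eq_dec B (A - 1)) as [->|HB]; [rewrite minor_below_diag by lia; lra|].
  unfold minor. replace B with (A + (B - A))%nat by lia.
  generalize (B - A)%nat as d. induction d as [|d IH].
  - specialize (X_lc (A - 1)). replace (S (A - 1)) with A in X_lc by lia.
    rewrite Nat.add_0_r. lra.
  - replace (A + S d)%nat with (S (A + d)) by lia.
    specialize (X_lc (A + d)).
    assert (Hp : 0 < X (A + d)%nat) by (replace (A + d)%nat with (S (A + d - 1)) by lia; apply X_pos).
    assert (Hq : 0 < X (S (A + d))) by apply X_pos.
    assert (Hu := X_nonneg (A - 1)).
    apply (Rmult_le_reg_r (X (A + d)%nat)); [exact Hp|]. nra.
Qed.

(* Monotonicity needs X nondecreasing as well: the minors grow along each row. *)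
Lemma minor_nondecr (A B : nat) : (1 <= A <= S B)%nat -> minor A B <= minor A (S B).
Proof.
  intros HAB.
  destruct (Nat.eq_dec B (A - 1)) as [->|HB].
  { rewrite minor_below_diag by lia. apply minor_nonneg. lia. }
  assert (Huq := minor_nonneg A B HAB). unfold minor in *.
  specialize (X_lc B). specialize (X_nondecr B).
  assert (Hp : 0 < X B) by (replace B with (S (B - 1)) by lia; apply X_pos).
  assert (Hq : 0 < X (S B)) by apply X_pos.
  assert (Hu := X_nonneg (A - 1)).
  set (u := X (A - 1)%nat) in *; set (v := X A) in *; set (p := X B) in *;
  set (q := X (S B)) in *; set (r := X (S (S B))) in *.
  assert (u * q * (p * r - p * q) <= u * q * (q * q - p * q))
    by (apply Rmult_le_compat_l; nra).
  assert (u * q * (q * (q - p)) <= v * p * (q * (q - p)))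
    by (apply Rmult_le_compat_r; nra).
  apply (Rmult_le_reg_r (p * q)); [nra|]. nra.
Qed.

Variable g : nat -> R.
Hypothesis g_nonneg : forall k, 0 <= g k.
Hypothesis g_nonincr : forall k, g (S k) <= g k.
Variable M : nat.

(* trunc J m is the m-th coefficient of g_0 + ... + g_J x^J times X; disc J is the
   log-concavity defect at M+1 of this truncated convolution; upper/lower are the
   weighted minor sums through which disc grows when the term g_{J+1} is added. *)
Definition trunc (J m : nat) : R := sum_f_R0 (fun j => g j * X (m - j)%nat) J.

Definition disc (J : nat) : R :=
  trunc J (S M) ^ 2 - trunc J M * trunc J (S (S M)).

Definition upper (J : nat) : R :=
  sum_f_R0 (fun i => g i * minor (S M - J) (S M - i)) J.

Definition lower (J : nat) : R :=
  sum_f_R0 (fun i => g i * minor (S M - J) (M - i)) J.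

Lemma disc_step (J : nat) : (J <= M)%nat ->
  disc (S J) = disc J + g (S J) * (upper (S J) - lower J).
Proof.
  intros HJ. set (A := (M - J)%nat).
  set (Y0 := trunc J M); set (Y1 := trunc J (S M)); set (Y2 := trunc J (S (S M))).
  set (S0 := sum_f_R0 (fun i => g i * minor A (S M - i)) J).
  assert (Hup : upper (S J) = S0 + g (S J) * minor A A).
  { unfold upper. rewrite tech5. replace (S M - S J)%nat with A by (unfold A; lia).
    reflexivity. }
  assert (Hlow : S0 - lower J = 2 * X A * Y1 - X (A - 1)%nat * Y2 - X (S A) * Y0).
  { unfold S0, lower, Y0, Y1, Y2, trunc.
    rewrite <- minus_sum, !scal_sum, <- !minus_sum.
    apply sum_eq; intros i Hi. unfold minor.
    replace (S M - J)%nat with (S A) by (unfold A; lia).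
    replace (S A - 1)%nat with A by lia.
    replace (S (S M - i)) with (S (S M) - i)%nat by lia.
    replace (S (M - i)) with (S M - i)%nat by lia. ring. }
  unfold disc, trunc. rewrite !tech5. fold (trunc J M) (trunc J (S M)) (trunc J (S (S M))).
  fold Y0 Y1 Y2. rewrite Hup.
  replace (S M - S J)%nat with A by (unfold A; lia).
  replace (M - S J)%nat with (A - 1)%nat by (unfold A; lia).
  replace (S (S M) - S J)%nat with (S A) by (unfold A; lia).
  replace (lower J) with (S0 - (2 * X A * Y1 - X (A - 1)%nat * Y2 - X (S A) * Y0)) by lra.
  unfold minor. ring.
Qed.

Lemma lower_le_upper (J : nat) : (J <= M)%nat -> g (S J) * lower J <= g J * upper J.
Proof.
  intros HJ.
  assert (Hlow0 : 0 <= lower J).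
  { apply sum_nonneg; intros i Hi. apply Rmult_le_pos; [apply g_nonneg|].
    apply minor_nonneg. lia. }
  assert (Hlow : lower J <= upper J).
  { apply sum_Rle; intros i Hi. apply Rmult_le_compat_l; [apply g_nonneg|].
    replace (S M - i)%nat with (S (M - i)) by lia. apply minor_nondecr. lia. }
  assert (g (S J) * lower J <= g J * lower J)
    by (apply Rmult_le_compat_r; [exact Hlow0 | apply g_nonincr]).
  assert (g J * lower J <= g J * upper J)
    by (apply Rmult_le_compat_l; [apply g_nonneg | exact Hlow]).
  lra.
Qed.

(* Telescoping invariant: the defect always dominates the current gain term. *)
Lemma disc_lower_bound (J : nat) : (J <= S M)%nat -> g J * upper J <= disc J.
Proof.
  induction J as [|J IH]; intros HJ.
  - unfold upper, disc, trunc, minor. simpl sum_f_R0.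
    rewrite !Nat.sub_0_r. replace (S M - 1)%nat with M by lia. nra.
  - rewrite disc_step by lia.
    pose proof (IH ltac:(lia)). pose proof (lower_le_upper J ltac:(lia)). lra.
Qed.

(* At J = M+1 the truncation is the full convolution and the gain term vanishes
   (the minors with A = 0 are zero because X 0 = 0). *)
Lemma conv_lc_shifted : conv g X M * conv g X (S (S M)) <= conv g X (S M) ^ 2.
Proof.
  assert (Hdisc := disc_lower_bound (S M) (le_n _)).
  assert (Hup : upper (S M) = 0).
  { unfold upper. rewrite Nat.sub_diag.
    rewrite (sum_eq _ (fun _ => 0)) by (intros i _; unfold minor; cbn [Nat.sub]; rewrite X0; ring).
    rewrite sum_cte. ring. }
  unfold disc, trunc in Hdisc. rewrite Hup, Rmult_0_r in Hdisc.
  assert (E0 : sum_f_R0 (fun j => g j * X (M - j)%nat) (S M) = conv g X M).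
  { rewrite tech5. replace (M - S M)%nat with 0%nat by lia. rewrite X0. unfold conv. ring. }
  assert (E2 : conv g X (S (S M)) = sum_f_R0 (fun j => g j * X (S (S M) - j)%nat) (S M)).
  { unfold conv. rewrite tech5, Nat.sub_diag, X0. ring. }
  rewrite E0 in Hdisc. rewrite E2. unfold conv at 2. lra.
Qed.
End ConvolutionLogConcave.

(* Positive (since nondecreasing from a positive start), nondecreasing, log-concave. *)
Definition incr_lc (x : nat -> R) : Prop :=
  0 < x 0%nat /\ (forall k, x k <= x (S k)) /\
  (forall k, x k * x (S (S k)) <= x (S k) ^ 2).

Definition shift0 (x : nat -> R) (k : nat) : R :=
  match k with O => 0 | S k' => x k' end.

Lemma conv_shift0 (g x : nat -> R) (m : nat) : conv g (shift0 x) (S m) = conv g x m.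
Proof.
  unfold conv. rewrite tech5, Nat.sub_diag. simpl (shift0 x 0). rewrite Rmult_0_r, Rplus_0_r.
  apply sum_eq; intros k Hk. replace (S m - k)%nat with (S (m - k)) by lia. reflexivity.
Qed.

Lemma conv_nondecr (g x : nat -> R) (m : nat) :
  (forall k, 0 <= g k) -> (forall k, 0 <= x k) -> (forall k, x k <= x (S k)) ->
  conv g x m <= conv g x (S m).
Proof.
  intros Hg Hx Hx_nondecr. unfold conv. rewrite tech5.
  assert (0 <= g (S m) * x (S m - S m)%nat) by (apply Rmult_le_pos; auto).
  assert (sum_f_R0 (fun k => g k * x (m - k)%nat) m <= sum_f_R0 (fun k => g k * x (S m - k)%nat) m).
  { apply sum_Rle; intros k Hk. apply Rmult_le_compat_l; auto.
    replace (S m - k)%nat with (S (m - k)) by lia. auto. }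
  lra.
Qed.

Lemma conv_incr_lc (g x : nat -> R) :
  incr_lc x -> (forall k, 0 <= g k) -> (forall k, g (S k) <= g k) -> 0 < g 0%nat ->
  incr_lc (conv g x).
Proof.
  intros (Hx0 & Hx_nondecr & Hx_lc) Hg Hg_nonincr Hg0.
  assert (Hx_pos : forall k, 0 < x k).
  { induction k as [|k IH]; [exact Hx0|]. specialize (Hx_nondecr k). lra. }
  assert (Hx_nonneg : forall k, 0 <= x k) by (intros k; apply Rlt_le, Hx_pos).
  split; [|split].
  - unfold conv. simpl. nra.
  - intros k. apply conv_nondecr; auto.
  - intros k. rewrite <- (conv_shift0 g x k), <- (conv_shift0 g x (S k)),
      <- (conv_shift0 g x (S (S k))).
    apply conv_lc_shifted; auto.
    + intros [|j]; simpl; auto.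
    + intros [|j]; simpl; [nra | auto].
Qed.

Definition logderiv (A f : nat -> R) : Prop := forall n, deriv f n = conv A f n.

Lemma logderiv_ext (A B f : nat -> R) :
  (forall t, A t = B t) -> logderiv A f -> logderiv B f.
Proof. intros E Hf n. rewrite Hf. apply conv_ext; auto. Qed.

Lemma logderiv_conv (A B f h : nat -> R) :
  logderiv A f -> logderiv B h -> logderiv (fun t => A t + B t) (conv f h).
Proof.
  intros Hf Hh n. rewrite deriv_conv, conv_plus_l.
  rewrite (conv_ext (deriv f) (conv A f) h h), (conv_ext f f (deriv h) (conv B h)) by auto.
  rewrite (conv_assoc A f h), <- (conv_assoc f B h), <- (conv_assoc B f h).
  f_equal. apply conv_ext; [intros; apply conv_comm | auto].
Qed.

Lemma logderiv_unique (A f h : nat -> R) (lam : R) :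
  logderiv A f -> logderiv A h -> f 0%nat = lam * h 0%nat -> forall n, f n = lam * h n.
Proof.
  intros Hf Hh H0. apply Nat.strong_induction_le; [exact H0|]. intros n IH.
  assert (Hn : 0 < INR (S n)) by (apply lt_0_INR; lia).
  apply (Rmult_eq_reg_l (INR (S n))); [|lra].
  transitivity (lam * deriv h n); [|unfold deriv; ring].
  change (deriv f n = lam * deriv h n). rewrite Hf, Hh. unfold conv.
  rewrite scal_sum. apply sum_eq; intros k Hk. rewrite IH by lia. ring.
Qed.

(* Coefficients of (1 - c x)^{-1/2}: binom(2k,k) (c/4)^k, via consecutive ratios. *)
Fixpoint inv_sqrt_coef (c : R) (k : nat) : R :=
  match k with
  | O => 1
  | S k' => inv_sqrt_coef c k' * (c * (2 * INR k' + 1) / (2 * INR k' + 2))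
  end.

(* (1 - c x)^{-1/2} has log-derivative c/(2(1 - cx)) = sum_t c^{t+1}/2 x^t. *)
Lemma logderiv_inv_sqrt (c : R) :
  logderiv (fun t => c ^ S t / 2) (inv_sqrt_coef c).
Proof.
  intros j. unfold deriv, conv. induction j as [|j IH].
  - simpl. field.
  - rewrite sum_first.
    rewrite (sum_eq _ (fun k => c ^ S k / 2 * inv_sqrt_coef c (j - k)%nat * c))
      by (intros k _; simpl pow; cbn [Nat.sub]; field).
    rewrite <- scal_sum, <- IH, Nat.sub_0_r.
    change (inv_sqrt_coef c (S (S j)))
      with (inv_sqrt_coef c (S j) * (c * (2 * INR (S j) + 1) / (2 * INR (S j) + 2))).
    rewrite (S_INR (S j)). assert (0 <= INR (S j)) by apply pos_INR.
    simpl pow. field. lra.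
Qed.

(* For 0 <= c <= 1 the ratios lie in [0,1]: nonnegative and nonincreasing. *)
Lemma inv_sqrt_coef_shape (c : R) : 0 <= c <= 1 ->
  (forall k, 0 <= inv_sqrt_coef c k) /\ (forall k, inv_sqrt_coef c (S k) <= inv_sqrt_coef c k).
Proof.
  intros Hc.
  assert (Hratio : forall k, 0 <= c * (2 * INR k + 1) / (2 * INR k + 2) <= 1).
  { intros k. assert (0 <= INR k) by apply pos_INR.
    split; [apply Rmult_le_pos; [nra | apply Rlt_le, Rinv_0_lt_compat; lra]|].
    apply Rmult_le_reg_r with (2 * INR k + 2); [lra|]. unfold Rdiv.
    rewrite Rmult_assoc, Rinv_l by lra. nra. }
  assert (Hnonneg : forall k, 0 <= inv_sqrt_coef c k).
  { induction k as [|k IH]; simpl; [lra|]. specialize (Hratio k). nra. }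
  split; [exact Hnonneg|]. intros k. simpl. specialize (Hratio k). specialize (Hnonneg k). nra.
Qed.

(* Coefficients of (1 - x)^{-1}; convolving with them forms partial sums. *)
Definition ones (k : nat) : R := 1.

Lemma logderiv_ones : logderiv (fun _ => 1) ones.
Proof. intros j. unfold deriv, conv, ones. rewrite sum_cte. ring. Qed.

Lemma ones_incr_lc : incr_lc ones.
Proof. unfold incr_lc, ones. repeat split; intros; lra. Qed.

Lemma sum_range_last (f : nat -> R) (m k : nat) :
  sum_range f m (S k) = sum_range f m k + f (m + k)%nat.
Proof.
  revert m; induction k as [|k IH]; intros m; [simpl; rewrite Nat.add_0_r; ring|].
  change (sum_range f m (S (S k))) with (f m + sum_range f (S m) (S k)).
  change (sum_range f m (S k)) with (f m + sum_range f (S m) k).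
  rewrite IH. replace (S m + k)%nat with (m + S k)%nat by lia. ring.
Qed.

Lemma sum_range_sum_f_R0 (f : nat -> R) (m k : nat) :
  sum_range f m (S k) = sum_f_R0 (fun i => f (m + i)%nat) k.
Proof.
  revert m; induction k as [|k IH]; intros m; [simpl; rewrite Nat.add_0_r; ring|].
  change (sum_range f m (S (S k))) with (f m + sum_range f (S m) (S k)).
  rewrite sum_first, Nat.add_0_r, IH. f_equal.
  apply sum_eq; intros i _. f_equal. lia.
Qed.

Lemma plist_length (s : nat) (a : nat -> R) (n : nat) : length (plist s a n) = S n.
Proof. induction n as [|n IH]; [reflexivity|]. cbn [plist]. rewrite length_app, IH. simpl. lia. Qed.

Lemma plist_nth (s : nat) (a : nat -> R) (m i : nat) :
  (i <= m)%nat -> nth i (plist s a m) 0 = pp s a i.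
Proof.
  induction m as [|m IH]; intros Hi.
  - replace i with 0%nat by lia. reflexivity.
  - destruct (Nat.le_gt_cases i m) as [Him|Him].
    + cbn [plist]. rewrite app_nth1 by (rewrite plist_length; lia). auto.
    + replace i with (S m) by lia. reflexivity.
Qed.

Lemma pp_succ (s : nat) (a : nat -> R) (n : nat) :
  pp s a (S n) = / INR (S n) * sum_f_R0 (fun i => MM s a (S n - i)%nat * pp s a i) n.
Proof.
  unfold pp at 1. cbn [plist]. rewrite app_nth2 by (rewrite plist_length; lia).
  rewrite plist_length, Nat.sub_diag, sum_range_sum_f_R0. simpl nth. f_equal.
  apply sum_eq; intros i Hi. rewrite plist_nth by lia. reflexivity.
Qed.

Lemma logderiv_pp (s : nat) (a : nat -> R) : logderiv (fun t => MM s a (S t)) (pp s a).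
Proof.
  intros n. unfold deriv, conv. rewrite pp_succ.
  assert (Hn : 0 < INR (S n)) by (apply lt_0_INR; lia).
  rewrite <- Rmult_assoc, Rinv_r, Rmult_1_l by lra.
  rewrite sum_rev. apply sum_eq; intros k Hk.
  replace (S n - (n - k))%nat with (S k) by lia. reflexivity.
Qed.

(* Coefficients of (1 - x)^{-1} prod_{i=2}^{k+1} (1 - c_i x)^{-1/2}. *)
Fixpoint W_series (a : nat -> R) (k : nat) : nat -> R :=
  match k with
  | O => ones
  | S k' => conv (inv_sqrt_coef (cc a (2 + k'))) (W_series a k')
  end.

Lemma logderiv_W_series (a : nat -> R) (k : nat) :
  logderiv (fun t => 1 + / 2 * sum_range (fun i => cc a i ^ S t) 2 k) (W_series a k).
Proof.
  induction k as [|k IH].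
  - apply (logderiv_ext (fun _ => 1)); [intros; simpl; ring | exact logderiv_ones].
  - eapply logderiv_ext; [|exact (logderiv_conv _ _ _ _ (logderiv_inv_sqrt _) IH)].
    intros t. rewrite sum_range_last. lra.
Qed.

Lemma W_series_at0 (a : nat -> R) (k : nat) : W_series a k 0%nat = 1.
Proof. induction k as [|k IH]; [reflexivity|]. simpl. unfold conv. simpl. rewrite IH. ring. Qed.

Lemma W_series_incr_lc (a : nat -> R) (k : nat) :
  (forall i, (2 <= i <= S k)%nat -> 0 <= cc a i <= 1) -> incr_lc (W_series a k).
Proof.
  induction k as [|k IH]; intros Hc; [exact ones_incr_lc|].
  destruct (inv_sqrt_coef_shape (cc a (2 + k))) as [Hnonneg Hnonincr]; [apply Hc; lia|].
  apply conv_incr_lc; auto; [apply IH; intros; apply Hc; lia | simpl; lra].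
Qed.

Lemma WW_series_eq (s : nat) (a : nat -> R) (n : nat) :
  WW s a n = p0 s a * W_series a (s - 1) n.
Proof.
  assert (Hconv : logderiv (fun t => MM s a (S t) + 1) (conv (pp s a) ones))
    by exact (logderiv_conv _ _ _ _ (logderiv_pp s a) logderiv_ones).
  assert (HW_series : logderiv (fun t => MM s a (S t) + 1) (W_series a (s - 1))).
  { eapply logderiv_ext; [|apply logderiv_W_series]. intros t. unfold MM. ring. }
  transitivity (conv (pp s a) ones n).
  { unfold WW, conv, ones. rewrite sum_range_sum_f_R0. apply sum_eq; intros; simpl; ring. }
  apply (logderiv_unique _ _ _ _ Hconv HW_series).
  rewrite W_series_at0. reflexivity.
Qed.

Lemma a_ge_one (s : nat) (a : nat -> R) :
  a 1%nat = 1 -> (forall i, (1 <= i)%nat -> (i < s)%nat -> a i <= a (S i)) ->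
  forall i, (1 <= i <= s)%nat -> 1 <= a i.
Proof.
  intros Ha1 Ha_mono i Hi. induction i as [|i IH]; [lia|].
  destruct (Nat.eq_dec i 0) as [->|Hi0]; [lra|].
  specialize (Ha_mono i ltac:(lia) ltac:(lia)). specialize (IH ltac:(lia)). lra.
Qed.

Lemma cc_in_unit (s : nat) (a : nat -> R) :
  a 1%nat = 1 -> (forall i, (1 <= i)%nat -> (i < s)%nat -> a i <= a (S i)) ->
  forall i, (2 <= i <= s)%nat -> 0 <= cc a i <= 1.
Proof.
  intros Ha1 Ha_mono i Hi. assert (Ha := a_ge_one s a Ha1 Ha_mono i ltac:(lia)).
  unfold cc. assert (0 < / a i) by (apply Rinv_0_lt_compat; lra).
  assert (/ a i <= 1) by (rewrite <- Rinv_1; apply Rinv_le_contravar; lra).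
  lra.
Qed.

Theorem lemma3 (s : nat) (a : nat -> R) :
  (2 <= s)%nat ->
  a 1%nat = 1 ->
  (forall i, (1 <= i)%nat -> (i < s)%nat -> a i <= a (S i)) ->
  (exists i, (2 <= i <= s)%nat /\ 1 < a i) ->
  forall i, (1 <= i)%nat ->
    WW s a i ^ 2 >= WW s a (i - 1) * WW s a (i + 1).
Proof.
  intros _ Ha1 Ha_mono _ i Hi.
  destruct (W_series_incr_lc a (s - 1)) as (_ & _ & Hlc).
  { intros j Hj. apply (cc_in_unit s); auto; lia. }
  destruct i as [|i]; [lia|].
  replace (S i - 1)%nat with i by lia. replace (S i + 1)%nat with (S (S i)) by lia.
  rewrite !WW_series_eq. specialize (Hlc i).
  assert (0 <= p0 s a ^ 2 * (W_series a (s - 1) (S i) ^ 2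
                             - W_series a (s - 1) i * W_series a (s - 1) (S (S i))))
    by (apply Rmult_le_pos; nra).
  apply Rle_ge. nra.
Qed.
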